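(* Let $q$ be a prime with $q\equiv 1 \pmod 3$, let $k=\frac{2q-2}{3}$, let $p_1<\dots<p_k$ be primes with $2q+10<p_1$, and let $n=6q\prod_{j=1}^k p_j$. Then $g(n)\ge 2q+8$ and $X_n$ contains a dominating cycle with $2q+6$ vertices; in particular $\gamma_t(X_n)\le\gamma_c(X_n)\le 2q+6\le g(n)-2$.
   Context: For a positive integer $n$, $X_n$ is the graph on $\{0,\dots,n-1\}$ with $a,b$ adjacent iff $\gcd(a-b,n)=1$. The Jacobsthal function $g(n)$ is the least positive integer $m$ such that every set of $m$ consecutive integers contains an integer coprime to $n$. A dominating cycle is a cycle whose vertex set is dominating (every vertex lies in the set or is adjacent to a vertex of it); $\gamma_c(G)$ is the minimum number of vertices of a dominating cycle. The total domination number $\gamma_t(G)$ is the minimum size of a set $S$ such that every vertex of $G$ is adjacent to some vertex of $S$. *)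

From HB Require Import structures.
From mathcomp Require Import all_boot all_order all_algebra.
From Stdlib Require Import ClassicalEpsilon.
Set Implicit Arguments. Unset Strict Implicit. Unset Printing Implicit Defensive.
Import Order.TTheory GRing.Theory Num.Theory.

(* Least natural number satisfying a Prop predicate (0 if none exists). *)
Definition Pbool (P : Prop) : bool :=
  if excluded_middle_informative P then true else false.

Definition least (P : nat -> Prop) : nat :=
  match excluded_middle_informative (exists m, P m) with
  | left H => @ex_minn (fun m => Pbool (P m))
                (let: ex_intro m Hm := H in
                 ex_intro _ m (match excluded_middle_informative (P m) as b
                       return (if b then true else false) = true with
                       | left _ => erefl | right NH => False_ind _ (NH Hm) end))
  | right _ => 0
  end.

Definition jac_window (n m : nat) : Prop :=
  forall a : int, exists2 i : nat, (i < m)%N & coprimez (a + i%:Z) n%:Z.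

Definition jacobsthal (n : nat) : nat :=
  least (fun m => (0 < m)%N /\ jac_window n m).

Definition Xadj (n : nat) : rel 'I_n :=
  fun a b => coprimez (a%:Z - b%:Z) n%:Z.

Definition is_graph_cycle (T : finType) (e : rel T) (s : seq T) : Prop :=
  (3 <= size s)%N /\ uniq s /\ cycle e s.

Definition dominating (T : finType) (e : rel T) (s : seq T) : Prop :=
  forall v : T, v \in s \/ exists2 u, u \in s & e v u.

Definition total_dominating (T : finType) (e : rel T) (S : {set T}) : Prop :=
  forall v : T, exists2 u, u \in S & e v u.

Definition dominating_cycle (T : finType) (e : rel T) (s : seq T) : Prop :=
  is_graph_cycle e s /\ dominating e s.

Definition gamma_c (T : finType) (e : rel T) : nat :=
  least (fun m => exists s : seq T, dominating_cycle e s /\ size s = m).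

Definition gamma_t (T : finType) (e : rel T) : nat :=
  least (fun m => exists S : {set T}, total_dominating e S /\ #|S| = m).

From HB Require Import structures.
From mathcomp Require Import all_boot all_order all_algebra.
From mathcomp Require Import zify.
From Stdlib Require Import ClassicalEpsilon.

(* Write q = 6u + 1, so that k = 4u.  By the Chinese remainder theorem there is an x with
   x = 2 (mod 6), x = -3 (mod q) and p_j | x + 3j + 5 + (j mod 2); then each of the
   2q + 7 integers x, ..., x + 12u + 8 is divisible by 2, by 3, by q (offsets 3 and
   12u + 5) or by the prime p_j assigned to its offset, whence g(n) >= 2q + 8.
   The cycle 0, 1, ..., 12u + 3, 12u + 8, 12u + 9, 12u + 4, 12u + 5 has steps 1, 5 and
   12u + 5, all prime to n.  It dominates X_n: for every v, at least 4u + 1 of its vertices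
   s make v - s prime to 6q, and as the vertices are smaller than every p_j, each p_j
   divides v - s for at most one of them; there are only 4u primes p_j. *)


Lemma PboolP (P : Prop) : reflect P (Pbool P).
Proof. by rewrite /Pbool; case: excluded_middle_informative => ?; constructor. Qed.

Lemma leastP (P : nat -> Prop) m : P m -> P (least P) /\ least P <= m.
Proof.
move=> Pm; rewrite /least; case: excluded_middle_informative => [ex|[]]; last by exists m.
by case: ex_minnP => l /PboolP Pl l_min; split=> //; apply/l_min/PboolP.
Qed.

Lemma jac_window_self n : 0 < n -> jac_window n n.
Proof.
move=> n_gt0 a; set r := ((1 - a) %% n)%Z.
have r_ge0 : (0 <= r)%R by apply: modz_ge0; rewrite eqz_nat -lt0n.
have r_abs : Posz `|r| = r by rewrite gez0_abs.
exists `|r|; first by rewrite -ltz_nat r_abs ltz_pmod.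
by rewrite r_abs /coprimez -gcdz_modl modzDmr (GRing.addrC a) GRing.subrK gcdz_modl gcd1z.
Qed.

Lemma jacobsthal_gt n L x : 0 < n -> (forall i, i < L -> ~~ coprime (x + i) n) ->
  L < jacobsthal n.
Proof.
move=> n_gt0 run.
have [[_ win] _] := @leastP (fun m => 0 < m /\ jac_window n m) n
  (conj n_gt0 (jac_window_self n n_gt0)).
have [i i_lt] := win x; rewrite -PoszD coprimezE /= => coprime_xi.
have [/run/negP // | L_le_i] := ltnP i L.
exact: leq_ltn_trans L_le_i i_lt.
Qed.

Lemma gamma_c_le (T : finType) (e : rel T) s : dominating_cycle e s -> gamma_c e <= size s.
Proof. by move=> ds; apply: (proj2 (@leastP _ (size s) _)); exists s. Qed.

Lemma gamma_t_le_gamma_c (T : finType) (e : rel T) s :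
  dominating_cycle e s -> gamma_t e <= gamma_c e.
Proof.
move=> ds; rewrite /gamma_c.
have [[c [[[_ [uniq_c cycle_c]] dom_c] <-]] _] :=
  @leastP (fun m => exists s, dominating_cycle e s /\ size s = m) _ (ex_intro _ s (conj ds erefl)).
apply: (proj2 (@leastP (fun m => exists S, total_dominating e S /\ #|S| = m) (size c) _)).
exists [set x in c]; split; last by rewrite cardsE; apply/card_uniqP.
move=> v; have [v_c | [w w_c vw]] := dom_c v; last by exists w; rewrite ?inE.
by exists (next c v); rewrite ?inE ?mem_next // next_cycle.
Qed.

Lemma coprime_addn m n : coprime (m + n) n = coprime m n.
Proof. by rewrite /coprime gcdnC gcdnDr gcdnC. Qed.

Lemma coprime_subn d n : d <= n -> coprime (n - d) n = coprime d n.
Proof.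
move=> d_le_n; rewrite /coprime -{2}(subnK d_le_n) gcdnDl gcdnC.
by rewrite -{2}(subnKC d_le_n) gcdnDl.
Qed.

Lemma XadjE n (a b : 'I_n) : Xadj a b = coprime `|a - b| n.
Proof. by []. Qed.

Lemma Xadj_shift n (a b : 'I_n) : Xadj a b = coprime (a + n - b) n.
Proof.
rewrite XadjE; have [b_le_a | a_lt_b] := leqP b a.
  by rewrite distnEl // -addnBAC // coprime_addn.
have b_lt_n := ltn_ord b.
rewrite distnEr ?(ltnW a_lt_b) // (_ : a + n - b = n - (b - a)) ?coprime_subn //; lia.
Qed.

Lemma coprime_prodl_ord N (m : nat -> nat) y :
  coprime (\prod_(i < N) m i) y = [forall i : 'I_N, coprime (m i) y].
Proof.
by rewrite (big_morph (coprime^~ y) (fun a b => coprimeMl y a b) (coprime1n y)) big_andE.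
Qed.

Lemma coprime_prod_primes k (p : nat -> nat) d : (forall j, j < k -> prime (p j)) ->
  coprime d (\prod_(j < k) p j) = [forall j : 'I_k, ~~ (p j %| d)].
Proof.
move=> prime_p; rewrite coprime_sym coprime_prodl_ord.
by apply: eq_forallb => j; rewrite prime_coprime ?prime_p.
Qed.

Lemma dvdn_prod_ord N (m : nat -> nat) (i : 'I_N) : m i %| \prod_(j < N) m j.
Proof. by rewrite (bigD1 i) //= dvdn_mulr. Qed.

Lemma chinese_family N (m r : nat -> nat) :
  (forall i j, i < j -> j < N -> coprime (m i) (m j)) ->
  exists x, forall i, i < N -> x = r i %[mod m i].
Proof.
elim: N => [|N IH] co_m; first by exists 0.
have [x x_mod] := IH (fun i j ij jN => co_m i j ij (ltnW jN)).
have co : coprime (\prod_(i < N) m i) (m N).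
  by rewrite coprime_prodl_ord; apply/forallP => i; apply: co_m.
exists (chinese (\prod_(i < N) m i) (m N) x (r N)) => i.
rewrite ltnS leq_eqVlt => /orP[/eqP -> | i_lt]; first exact: chinese_modr.
have dvd_i := dvdn_prod_ord _ m (Ordinal i_lt).
by rewrite -(modn_dvdm _ dvd_i) chinese_modl // (modn_dvdm _ dvd_i) x_mod.
Qed.

Lemma eq_mod_dvdnD {d x y} i : x = y %[mod d] -> (d %| x + i) = (d %| y + i).
Proof. by move=> xy; rewrite /dvdn -modnDml xy modnDml. Qed.

Lemma eq_of_dvdn_sub {d V a b} : a <= V -> b <= V -> a < d -> b < d ->
  d %| V - a -> d %| V - b -> a = b.
Proof.
move=> aV bV ad bd; rewrite -!eqn_mod_dvd // => /eqP Va /eqP Vb.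
by rewrite -(modn_small ad) -(modn_small bd) -Va -Vb.
Qed.

(* Pigeonhole: a prime p_j exceeding all of T divides V - s for at most one s in T. *)
Lemma size_noncoprime_shifts k (p : nat -> nat) V (T : seq nat) :
  (forall j, j < k -> prime (p j)) -> uniq T ->
  (forall s, s \in T -> s <= V /\ forall j, j < k -> s < p j) ->
  (forall s, s \in T -> ~~ coprime (V - s) (\prod_(j < k) p j)) ->
  size T <= k.
Proof.
move=> prime_p uniq_T small_T noncop_T.
pose f s := [pick j : 'I_k | p j %| V - s].
have fP s : s \in T -> exists2 j, f s = Some j & p j %| V - s.
  move=> sT; rewrite /f; case: pickP => [j // | none]; first by exists j.
  have := noncop_T s sT; rewrite coprime_prod_primes // negb_forall => /existsP[j].
  by rewrite negbK none.
have f_inj : {in T &, injective f}.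
  move=> s1 s2 /[dup] s1T /fP[j1 -> dvd1] /[dup] s2T /fP[j2 -> dvd2] [j12].
  have [s1V s1p] := small_T _ s1T; have [s2V s2p] := small_T _ s2T.
  apply: (eq_of_dvdn_sub s1V s2V (s1p _ (ltn_ord j1)) _ dvd1); rewrite j12 //.
  exact: s2p.
rewrite -(size_map f); apply: (@leq_trans (size (map Some (enum 'I_k)))).
  apply: uniq_leq_size; first by rewrite map_inj_in_uniq.
  by move=> _ /mapP[s /fP[j -> _] ->]; rewrite map_f ?mem_enum.
by rewrite size_map size_enum_ord.
Qed.

Lemma count_iota_periodic d m (a : pred nat) : (forall x, a x = a (x %% d)) ->
  count a (iota 0 (m * d)) = m * count a (iota 0 d).
Proof.
move=> a_per; elim: m => [|m IH] //.
rewrite mulSnr iotaD count_cat IH add0n mulSnr; congr (_ + _).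
rewrite -[m * d]addn0 iotaDl count_map; apply: eq_count => x /=.
by rewrite a_per modnMDl -a_per.
Qed.

(* For x <= V, V - x is prime to 6 iff off23 (V %% 2) (V %% 3) x. *)
Definition off23 (e f x : nat) := (x %% 2 != e) && (x %% 3 != f).

Lemma off23_mod6 e f x : off23 e f x = off23 e f (x %% 6).
Proof. by rewrite /off23 !modn_dvdm. Qed.

Lemma count_off23_iota e f m : e < 2 -> f < 3 ->
  count (off23 e f) (iota 0 (m * 6)) = m * 2.
Proof.
move=> e_lt2 f_lt3; rewrite count_iota_periodic; last exact: off23_mod6.
by case: e e_lt2 => [|[|]]; case: f f_lt3 => [|[|[|]]].
Qed.

Definition dom_cycle u :=
  0 :: iota 1 (12 * u + 3) ++ [:: 12 * u + 8; 12 * u + 9; 12 * u + 4; 12 * u + 5].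

Lemma mem_dom_cycle u x :
  (x \in dom_cycle u) = (x < 12 * u + 6) || (x == 12 * u + 8) || (x == 12 * u + 9).
Proof. by rewrite in_cons mem_cat mem_iota !inE; apply/idP/idP; lia. Qed.

Lemma dom_cycle_uniq u : uniq (dom_cycle u).
Proof.
rewrite /dom_cycle cons_uniq mem_cat mem_iota !inE cat_uniq iota_uniq /= !mem_iota !inE.
by lia.
Qed.

Lemma size_dom_cycle u : size (dom_cycle u) = 12 * u + 8.
Proof. by rewrite /= size_cat size_iota /=; lia. Qed.

Lemma count_dom_cycle u a : count a (dom_cycle u) =
  count a (iota 0 (12 * u + 6)) + a (12 * u + 8) + a (12 * u + 9).
Proof.
have /permP -> : perm_eq (dom_cycle u) (iota 0 (12 * u + 6) ++ [:: 12 * u + 8; 12 * u + 9]).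
  apply: uniq_perm => [|| x]; first exact: dom_cycle_uniq.
    by rewrite cat_uniq iota_uniq /= !mem_iota !inE; lia.
  by rewrite mem_dom_cycle mem_cat mem_iota !inE; apply/idP/idP; lia.
by rewrite count_cat /= addn0 addnA.
Qed.

Lemma count_off23_dom_cycle u e f : e < 2 -> f < 3 ->
  count (off23 e f) (dom_cycle u) = 4 * u + 2 + off23 e f 2 + off23 e f 3.
Proof.
move=> e_lt2 f_lt3.
rewrite count_dom_cycle (_ : 12 * u + 6 = (2 * u + 1) * 6); last by lia.
rewrite count_off23_iota // (off23_mod6 _ _ (12 * u + 8)) (off23_mod6 _ _ (12 * u + 9)).
have -> : (12 * u + 8) %% 6 = 2 by lia.
have -> : (12 * u + 9) %% 6 = 3 by lia.
lia.
Qed.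

Lemma off23_residue_bound e f r (b2 b3 : bool) : e < 2 -> f < 3 -> r < 6 ->
  (b2 -> r < 4) -> (b3 -> (r == 0) && b2) ->
  off23 e f r + off23 e f (r + 1) + (b2 && off23 e f (r + 2)) + (b3 && off23 e f (r + 3))
    <= 1 + off23 e f 2 + off23 e f 3.
Proof.
move=> e_lt2 f_lt3 r_lt6; case: e e_lt2 => [|[|//]] _; case: f f_lt3 => [|[|[|//]]] _.
all: case: r r_lt6 => [|[|[|[|[|[|//]]]]]] _; case: b2; case: b3 => //= b2_lt b3_eq.
all: by [have := b2_lt isT | have := b3_eq isT].
Qed.

(* As 6u + 1 = 1 (mod 6), the at most four vertices of the cycle in a residue class
   modulo 6u + 1 have consecutive residues modulo 6. *)
Lemma count_off23_class u e f c : 0 < u -> e < 2 -> f < 3 -> c < 6 * u + 1 ->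
  count (fun s => (s %% (6 * u + 1) == c) && off23 e f s) (dom_cycle u)
    <= 1 + off23 e f 2 + off23 e f 3.
Proof.
move=> u_gt0 e_lt2 f_lt3 c_lt.
pose in_cyc s := off23 e f s && (s \in dom_cycle u).
pose cls m := c + m * (6 * u + 1).
rewrite -size_filter.
apply: (@leq_trans (count in_cyc [:: cls 0; cls 1; cls 2; cls 3])).
  rewrite -size_filter; apply: uniq_leq_size; first by rewrite filter_uniq ?dom_cycle_uniq.
  move=> s; rewrite !mem_filter => /andP[/andP[/eqP s_mod off_s] s_cyc].
  rewrite /in_cyc off_s s_cyc /=.
  have : s %/ (6 * u + 1) < 4.
    by rewrite ltn_divLR; move: s_cyc; rewrite mem_dom_cycle; lia.
  have := divn_eq s (6 * u + 1); rewrite s_mod !inE /cls.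
  by case: (s %/ _) => [|[|[|[|//]]]] ->; lia.
have cls_mod6 m : off23 e f (cls m) = off23 e f (c %% 6 + m).
  by rewrite off23_mod6 [RHS]off23_mod6 /cls; congr off23; lia.
have cls_cyc m : m < 2 -> cls m \in dom_cycle u.
  by rewrite mem_dom_cycle /cls; case: m => [|[|//]] _; lia.
have cls2 : cls 2 \in dom_cycle u -> c %% 6 < 4.
  by rewrite mem_dom_cycle /cls; lia.
have cls3 : cls 3 \in dom_cycle u -> (c %% 6 == 0) && (cls 2 \in dom_cycle u).
  by rewrite !mem_dom_cycle /cls; lia.
rewrite /in_cyc /= !cls_mod6 (cls_cyc 0) // (cls_cyc 1) // !andbT !addn0 !addnA.
rewrite !(andbC (off23 _ _ _)).
exact: off23_residue_bound (ltn_pmod _ _) cls2 cls3.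
Qed.

Lemma count_off23_off_class u e f c : 0 < u -> e < 2 -> f < 3 -> c < 6 * u + 1 ->
  4 * u + 1 <= count (fun s => (s %% (6 * u + 1) != c) && off23 e f s) (dom_cycle u).
Proof.
move=> u_gt0 e_lt2 f_lt3 c_lt.
have count_split : count (off23 e f) (dom_cycle u) =
    count (fun s => (s %% (6 * u + 1) == c) && off23 e f s) (dom_cycle u) +
    count (fun s => (s %% (6 * u + 1) != c) && off23 e f s) (dom_cycle u).
  by rewrite -size_filter -(count_predC (fun s => s %% (6 * u + 1) == c)) !count_filter.
have := count_off23_class u e f c u_gt0 e_lt2 f_lt3 c_lt.
by rewrite count_off23_dom_cycle // in count_split; lia.
Qed.

Lemma path_succ_iota (e : rel nat) x m :
  (forall y, x <= y < x + m -> e y y.+1) -> path e x (iota x.+1 m).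
Proof.
elim: m x => [|m IH] x e_succ //=.
rewrite e_succ ?leqnn ?addnS ?ltnS ?leq_addr //=.
by apply: IH => y /andP[x_lt y_lt]; apply: e_succ; rewrite ltnW //= addnS.
Qed.

Lemma last_iota x m : last x (iota x.+1 m) = x + m.
Proof. by elim: m x => [|m IH] x /=; rewrite ?addn0 ?IH ?addnS. Qed.

Definition cover_offset j := 3 * j + 5 + j %% 2.

Section Construction.

Variables (u n : nat) (p : nat -> nat).
Hypotheses (u_gt0 : 0 < u) (prime_q : prime (6 * u + 1))
  (prime_p : forall j, j < 4 * u -> prime (p j))
  (p_large : forall j, j < 4 * u -> 12 * u + 12 < p j)
  (n_def : n = 6 * (6 * u + 1) * \prod_(j < 4 * u) p j).

Lemma coprime_n d : coprime d n =
  [&& ~~ (2 %| d), ~~ (3 %| d), ~~ (6 * u + 1 %| d) & [forall j : 'I_(4 * u), ~~ (p j %| d)]].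
Proof.
rewrite n_def (_ : 6 = 2 * 3) // !coprimeMr coprime_prod_primes // -!andbA.
by rewrite ![coprime d _]coprime_sym !prime_coprime.
Qed.

Lemma n_gt : 12 * u + 9 < n.
Proof.
have : 0 < \prod_(j < 4 * u) p j.
  by rewrite prodn_gt0 // => j; rewrite prime_gt0 ?prime_p.
by rewrite n_def; nia.
Qed.

Lemma coprime_n_small d : 0 < d <= 12 * u + 12 ->
  ~~ (2 %| d) -> ~~ (3 %| d) -> ~~ (6 * u + 1 %| d) -> coprime d n.
Proof.
move=> /andP[d_gt0 d_le] not2 not3 notq; rewrite coprime_n not2 not3 notq.
apply/forallP => j; apply/negP => /(dvdn_leq d_gt0).
by have := p_large _ (ltn_ord j); lia.
Qed.

Lemma dom_cycle_dominates V :
  12 * u + 9 <= V -> has (fun s => coprime (V - s) n) (dom_cycle u).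
Proof.
move=> V_large; apply/negPn/negP => /hasPn noncop.
have cyc_le s : s \in dom_cycle u -> s <= 12 * u + 9 by rewrite mem_dom_cycle; lia.
set T := [seq s <- dom_cycle u |
  (s %% (6 * u + 1) != V %% (6 * u + 1)) && off23 (V %% 2) (V %% 3) s].
have T_large : 4 * u + 1 <= size T.
  by rewrite size_filter; apply: count_off23_off_class; rewrite // ltn_pmod ?addn1.
have T_small : size T <= 4 * u.
  apply: (size_noncoprime_shifts _ _ V _ prime_p).
  - by rewrite filter_uniq ?dom_cycle_uniq.
  - move=> s; rewrite mem_filter => /andP[_ /cyc_le s_le].
    by split=> [|j /p_large]; lia.
  - move=> s; rewrite mem_filter /off23 => /andP[/andP[s_q /andP[s_2 s_3]] s_cyc].
    have s_V : s <= V by have := cyc_le s s_cyc; lia.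
    have := noncop s s_cyc; rewrite coprime_n coprime_prod_primes // -!eqn_mod_dvd //.
    by rewrite ![V %% _ == _]eq_sym (negbTE s_2) (negbTE s_3) (negbTE s_q).
by have := leq_trans T_large T_small; lia.
Qed.

Lemma dom_cycle_steps : cycle (fun a b : nat => coprime `|a - b| n) (dom_cycle u).
Proof.
have coprime5 : coprime 5 n.
  by apply: coprime_n_small; [lia | by [] | by [] | apply/negP => /dvdn_leq; lia].
have coprime_last : coprime (12 * u + 5) n.
  apply: coprime_n_small; [lia | lia | lia |].
  rewrite (_ : 12 * u + 5 = 2 * (6 * u + 1) + 3); last by lia.
  by rewrite (dvdn_addr _ (dvdn_mull 2 (dvdnn _))); apply/negP => /dvdn_leq; lia.
rewrite /dom_cycle /= rcons_cat cat_path last_iota add0n.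
apply/andP; split; first by apply: path_succ_iota => y _; rewrite distnS coprime1n.
by rewrite /= !distnDl addn0 coprime_last coprime5 coprime1n.
Qed.

Lemma Xadj_dominating_cycle :
  exists s : seq 'I_n, dominating_cycle (@Xadj n) s /\ size s = 12 * u + 8.
Proof.
have n_gt0 : 0 < n by have := n_gt; lia.
pose toI x : 'I_n := insubd (Ordinal n_gt0) x.
have toIK x : x <= 12 * u + 9 -> toI x = x :> nat.
  by move=> x_le; rewrite val_insubd (leq_ltn_trans x_le n_gt).
have cyc_le x : x \in dom_cycle u -> x <= 12 * u + 9 by rewrite mem_dom_cycle; lia.
exists (map toI (dom_cycle u)); split; last by rewrite size_map size_dom_cycle.
split; [split; [|split] | move=> v; right].
- by rewrite size_map size_dom_cycle; lia.
- rewrite map_inj_in_uniq ?dom_cycle_uniq // => a b /cyc_le a_le /cyc_le b_le.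
  by move/(congr1 (@nat_of_ord n)); rewrite !toIK.
- rewrite cycle_map; apply: (sub_in_cycle _ (allss (dom_cycle u)) dom_cycle_steps).
  by move=> a b /cyc_le a_le /cyc_le b_le; rewrite /= XadjE !toIK.
- have v_large : 12 * u + 9 <= v + n by have := n_gt; lia.
  have [s s_cyc cop_s] := hasP (dom_cycle_dominates _ v_large).
  exists (toI s); first exact: map_f.
  by rewrite Xadj_shift toIK ?cyc_le.
Qed.

Hypothesis p_incr : forall i j, i < j -> j < 4 * u -> p i < p j.

Lemma coprime_6q_prod : coprime (6 * (6 * u + 1)) (\prod_(j < 4 * u) p j).
Proof.
rewrite coprime_prod_primes //; apply/forallP => j.
have pj_prime := prime_p _ (ltn_ord j); have pj_large := p_large _ (ltn_ord j).
rewrite Euclid_dvdM // negb_or (dvdn_prime2 pj_prime prime_q); apply/andP; split.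
  by apply/negP => /dvdn_leq; lia.
by apply/eqP; lia.
Qed.

Lemma cover_residue : exists x, [/\ x %% 6 = 2, 6 * u + 1 %| x + 3 &
  forall j, j < 4 * u -> p j %| x + cover_offset j].
Proof.
have [y y_mod] : exists y, forall j, j < 4 * u -> y = p j - cover_offset j %[mod p j].
  apply: chinese_family => i j ij j_lt.
  rewrite prime_coprime ?prime_p ?(ltn_trans ij) // dvdn_prime2 ?prime_p ?(ltn_trans ij) //.
  by have := p_incr _ _ ij j_lt; lia.
set q := 6 * u + 1; set P := \prod_(j < 4 * u) p j.
have q_large : 6 < q by rewrite /q; lia.
have [x x_mod6q x_modP] : exists2 x, x = 5 * q - 3 %[mod 6 * q] & x = y %[mod P].
  exists (chinese (6 * q) P (5 * q - 3) y);
    [apply: chinese_modl | apply: chinese_modr]; exact: coprime_6q_prod.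
exists x; split.
- have d6 : 6 %| 6 * q := dvdn_mulr q (dvdnn 6).
  rewrite -(modn_dvdm x d6) x_mod6q (modn_dvdm _ d6).
  by move: q_large; rewrite /q; clear; lia.
- have dq : q %| 6 * q := dvdn_mull 6 (dvdnn q).
  have x_modq : x = 5 * q - 3 %[mod q].
    by rewrite -(modn_dvdm x dq) x_mod6q (modn_dvdm _ dq).
  rewrite (eq_mod_dvdnD _ x_modq) subnK; first exact/dvdn_mull/dvdnn.
  by move: q_large; clear; lia.
- move=> j j_lt; have := p_large _ j_lt => pj_large.
  have dj : p j %| P := dvdn_prod_ord _ p (Ordinal j_lt).
  have x_y : x = y %[mod p j] by rewrite -(modn_dvdm x dj) x_modP (modn_dvdm _ dj).
  rewrite (eq_mod_dvdnD _ (etrans x_y (y_mod _ j_lt))) subnK ?dvdnn // /cover_offset.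
  by move: j_lt pj_large; clear; lia.
Qed.

(* x + i is divisible by 2 for even i, by 3 for i = 1 (mod 3), by 6u + 1 for i = 3 and
   i = 12u + 5, and by p_j for the remaining offset i = cover_offset j. *)
Lemma run_of_noncoprimes : exists x, forall i, i < 12 * u + 9 -> ~~ coprime (x + i) n.
Proof.
have [x [x_mod6 x_modq x_modp]] := cover_residue.
exists x => i i_lt; rewrite coprime_n; apply/negP => /and4P[not2 not3 notq /forallP notp].
have [i_even | i_odd] := boolP (i %% 2 == 0); first by move: not2 x_mod6 i_even; clear; lia.
have [i_mod3 | i_mod3] := boolP (i %% 3 == 1); first by move: not3 x_mod6 i_mod3; clear; lia.
have [/orP[] /eqP i_def | i_other] := boolP ((i == 3) || (i == 12 * u + 5)).
- by move: notq; rewrite i_def x_modq.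
- move: notq; rewrite i_def (_ : x + (12 * u + 5) = x + 3 + 2 * (6 * u + 1)); last by lia.
  by rewrite (dvdn_addl _ (dvdn_mull 2 (dvdnn _))) x_modq.
- have [j j_lt offset_j] : exists2 j, j < 4 * u & cover_offset j = i.
    exists ((i - 5) %/ 3); rewrite /cover_offset;
      by move: i_lt i_odd i_mod3 i_other; clear; lia.
  by have := notp (Ordinal j_lt); rewrite /= -offset_j x_modp.
Qed.

End Construction.

Lemma prime_eq1_mod3_eq1_mod6 q : prime q -> q = 1 %[mod 3] -> exists2 u, q = 6 * u + 1 & 0 < u.
Proof.
move=> prime_q q_mod3; have q_mod2 : q %% 2 = 1.
  by case: (even_prime prime_q) q_mod3 => [-> // | q_odd _]; rewrite modn2 q_odd.
by exists (q %/ 6); move: q_mod2 q_mod3 (prime_gt1 prime_q); lia.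
Qed.

Theorem mainTheorem2 (q : nat) (p : nat -> nat) :
  prime q -> q = 1 %[mod 3] ->
  (forall j, j < (2 * q - 2) %/ 3 -> prime (p j)) ->
  (forall i j, i < j -> j < (2 * q - 2) %/ 3 -> p i < p j) ->
  2 * q + 10 < p 0 ->
  let n := 6 * q * \prod_(j < (2 * q - 2) %/ 3) p j in
  2 * q + 8 <= jacobsthal n /\
  (exists s : seq 'I_n, dominating_cycle (@Xadj n) s /\ size s = 2 * q + 6) /\
  gamma_t (@Xadj n) <= gamma_c (@Xadj n) /\
  gamma_c (@Xadj n) <= 2 * q + 6 /\
  2 * q + 6 <= jacobsthal n - 2.
Proof.
move=> prime_q q_mod3 prime_p p_incr p0_large n.
have [u q_def u_gt0] := prime_eq1_mod3_eq1_mod6 q prime_q q_mod3.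
subst q; have k_def : (2 * (6 * u + 1) - 2) %/ 3 = 4 * u by lia.
rewrite k_def in prime_p p_incr.
have n_def : n = 6 * (6 * u + 1) * \prod_(j < 4 * u) p j by rewrite /n k_def.
have p_large j : j < 4 * u -> 12 * u + 12 < p j.
  case: (posnP j) => [-> | j_gt0 j_lt]; first by move: p0_large; lia.
  by have := p_incr _ _ j_gt0 j_lt; lia.
have [x run] : exists x, forall i, i < 12 * u + 9 -> ~~ coprime (x + i) n.
  exact: (@run_of_noncoprimes u n p).
have n_large : 12 * u + 9 < n by exact: (@n_gt u n p).
have g_large := jacobsthal_gt _ _ _ (leq_ltn_trans (leq0n _) n_large) run.
have [s [dom_s size_s]] : exists s : seq 'I_n, dominating_cycle (@Xadj n) s /\ size s = 12 * u + 8.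
  exact: (@Xadj_dominating_cycle u n p).
have size_s' : size s = 2 * (6 * u + 1) + 6 by rewrite size_s; lia.
split; first by lia.
split; first by exists s.
split; first exact: gamma_t_le_gamma_c dom_s.
split; last by lia.
by rewrite -size_s'; exact: gamma_c_le.
Qed.
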